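(* Let $(D,\dagger)$ be a division $\mathbb{Q}$-algebra with positive involution of Albert type III or IV. In type III let $\alpha^{-1}\colon(\mathbb{H}^e,t)\to(D_\mathbb{R},\dagger)$ be an isomorphism of $\mathbb{R}$-algebras with involution, where $t$ is the canonical (quaternion conjugation) involution on each factor; in type IV let $\alpha^{-1}\colon(\mathrm{M}_d(\mathbb{C})^e,t)\to(D_\mathbb{R},\dagger)$ be an isomorphism of $\mathbb{R}$-algebras with involution, where $t$ is conjugate-transpose on each factor. Let $V$ be a left $D$-vector space with a non-degenerate $(D,\dagger)$-skew-Hermitian form $\psi$, and let $v_1,\dots,v_m$ be a weakly unitary $D$-basis of $V$. Then there exist $s_1,\dots,s_m\in D_\mathbb{R}^\times$ such that the vectors $s_1^{-1}v_1,\dots,s_m^{-1}v_m$ form a weakly unitary $D_\mathbb{R}$-basis of $V_\mathbb{R}$ (with respect to the $\mathbb{R}$-linear extension of $\psi$) satisfying: in type III, $\alpha(\psi(s_j^{-1}v_j,s_j^{-1}v_j))=(i,\dots,i)\in\mathbb{H}^e$ for all $j$; in type IV, for each $j$, $\alpha(\psi(s_j^{-1}v_j,s_j^{-1}v_j))=(\varepsilon_{1j},\dots,\varepsilon_{ej})$ where each $\varepsilon_{lj}$ is a $d\times d$ diagonal matrix with diagonal entries in $\{i,-i\}$; and moreover, for all $j$, \[\lvert s_j\rvert_D\le(2ke)^{1/4}\lvert\psi(v_j,v_j)\rvert_D^{1/2},\] where $k=1$ in type III and $k=d$ in type IV.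
   Context: Type III: $D$ is a totally definite quaternion algebra over a totally real field $F$, $e=[F:\mathbb{Q}]$, $D_\mathbb{R}\cong\mathbb{H}^e$, $\dagger$ the canonical involution. Type IV: the centre $F$ is a CM field, $[F:\mathbb{Q}]=2e$, $d=\sqrt{\dim_F D}$, $D_\mathbb{R}\cong\mathrm{M}_d(\mathbb{C})^e$, and $\dagger$ restricts to complex conjugation on $F$. $D_\mathbb{R}=D\otimes_\mathbb{Q}\mathbb{R}$, $V_\mathbb{R}=V\otimes_\mathbb{Q}\mathbb{R}$, and $\lvert a\rvert_D=\sqrt{\mathrm{Trd}_{D_\mathbb{R}/\mathbb{R}}(aa^\dagger)}$. A $(D,\dagger)$-skew-Hermitian form satisfies $\psi(y,x)=-\psi(x,y)^\dagger$, $\psi(ax,by)=a\psi(x,y)b^\dagger$; non-degenerate means for every $x\ne0$ some $y$ has $\psi(x,y)\ne0$. A basis is weakly unitary if $\psi(v_i,v_j)=0$ for $i\neq j$. *)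

From HB Require Import structures.
From mathcomp Require Import all_boot all_order all_algebra.
From mathcomp Require Import reals.
From mathcomp Require Import complex.

Set Implicit Arguments.
Unset Strict Implicit.
Unset Printing Implicit Defensive.

Import Order.TTheory GRing.Theory Num.Theory.
Local Open Scope ring_scope.

(* An algebra A of dimension n over a field K is K^n (row vectors 'rV_n)    *)
(* with e_i e_j = \sum_k c i j k e_k.  D = (Q^n, c), D_R = (R^n, ratr o c). *)
Section StructConst.
Variables (K : fieldType) (n : nat) (c : 'I_n -> 'I_n -> 'I_n -> K).

Definition amul (x y : 'rV[K]_n) : 'rV[K]_n :=
  \row_k \sum_(i < n) \sum_(j < n) x 0 i * y 0 j * c i j k.

Definition assoc_unital (u : 'rV[K]_n) : Prop :=
  (forall x y z, amul (amul x y) z = amul x (amul y z)) /\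
  (forall x, amul u x = x /\ amul x u = x).

Definition division (u : 'rV[K]_n) : Prop :=
  u != 0 /\ forall x, x != 0 -> exists y, amul x y = u /\ amul y x = u.

(* the involution x |-> x^dagger is x *m T; it is K-linear by construction *)
Definition involution (T : 'M[K]_n) : Prop :=
  (forall x y, amul x y *m T = amul (y *m T) (x *m T)) /\
  (forall x : 'rV[K]_n, x *m T *m T = x).

(* trace of left multiplication  L_a : x |-> a x  *)
Definition regtr (a : 'rV[K]_n) : K := \sum_(i < n) \sum_(j < n) a 0 j * c j i i.

(* reduced trace of an algebra of degree deg (deg^2 = dimension over the
   centre): Trd = Tr(L_a) / deg *)
Definition Trd (deg : nat) (a : 'rV[K]_n) : K := regtr a / deg%:R.

(* left D-vector space D^m and its D-linear combinations *)
Definition vec (m : nat) := 'I_m -> 'rV[K]_n.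

Definition vadd m (x y : vec m) : vec m := fun i => x i + y i.
Definition smul m (a : 'rV[K]_n) (x : vec m) : vec m := fun i => amul a (x i).
Definition lincomb m (a : 'I_m -> 'rV[K]_n) (v : 'I_m -> vec m) : vec m :=
  fun i => \sum_(j < m) amul (a j) (v j i).

Definition is_basis m (v : 'I_m -> vec m) : Prop :=
  (forall x : vec m, exists a : 'I_m -> 'rV[K]_n, forall i, x i = lincomb a v i) /\
  (forall a : 'I_m -> 'rV[K]_n, (forall i, lincomb a v i = 0) -> forall j, a j = 0).

Definition stdvec m (u : 'rV[K]_n) (i : 'I_m) : vec m :=
  fun i' => if i' == i then u else 0.

Definition skew_hermitian_nondeg m (T : 'M[K]_n) (psi : vec m -> vec m -> 'rV[K]_n) :
  Prop :=
  (forall x x' y, psi (vadd x x') y = psi x y + psi x' y) /\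
  (forall x y y', psi x (vadd y y') = psi x y + psi x y') /\
  (forall a b x y, psi (smul a x) (smul b y) = amul a (amul (psi x y) (b *m T))) /\
  (forall x y, psi y x = - (psi x y *m T)) /\
  (forall x, (exists i, x i != 0) -> exists y, psi x y != 0).

Definition weakly_unitary m (psi : vec m -> vec m -> 'rV[K]_n) (v : 'I_m -> vec m) :
  Prop := forall i j, i != j -> psi (v i) (v j) = 0.

End StructConst.

Definition pos_div_alg n (c : 'I_n -> 'I_n -> 'I_n -> rat) (u : 'rV[rat]_n)
    (T : 'M[rat]_n) (deg : nat) : Prop :=
  assoc_unital c u /\ division c u /\ involution c T /\
  (forall x, x != 0 -> 0 < Trd c deg (amul c x (x *m T))).

Section Extension.
Variable R : realType.

Definition cR n (c : 'I_n -> 'I_n -> 'I_n -> rat) : 'I_n -> 'I_n -> 'I_n -> R :=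
  fun i j k => ratr (c i j k).

Definition toR n (x : 'rV[rat]_n) : 'rV[R]_n := map_mx ratr x.
Definition toRmx n (T : 'M[rat]_n) : 'M[R]_n := map_mx ratr T.
Definition vecR n m (x : vec rat n m) : vec R n m := fun i => toR (x i).

Definition normD n (c : 'I_n -> 'I_n -> 'I_n -> rat) (T : 'M[rat]_n) (deg : nat)
    (a : 'rV[R]_n) : R :=
  Num.sqrt (Trd (cR c) deg (amul (cR c) a (a *m toRmx T))).

(* the R-linear extension of psi to V_R = D_R^m:
   psi_R(x, y) = \sum_{i,k} x_i psi(e_i, e_k) y_k^dagger *)
Definition psiR n m (c : 'I_n -> 'I_n -> 'I_n -> rat) (u : 'rV[rat]_n)
    (T : 'M[rat]_n) (psi : vec rat n m -> vec rat n m -> 'rV[rat]_n)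
    (x y : vec R n m) : 'rV[R]_n :=
  \sum_(i < m) \sum_(k < m)
     amul (cR c) (x i) (amul (cR c) (toR (psi (stdvec u i) (stdvec u k)))
                                    (y k *m toRmx T)).

Record quat := Quat { qre : R; qim : R; qjm : R; qkm : R }.

Definition qadd (p q : quat) : quat :=
  Quat (qre p + qre q) (qim p + qim q) (qjm p + qjm q) (qkm p + qkm q).
Definition qscale (r : R) (p : quat) : quat :=
  Quat (r * qre p) (r * qim p) (r * qjm p) (r * qkm p).
Definition qmul (p q : quat) : quat :=
  Quat (qre p * qre q - qim p * qim q - qjm p * qjm q - qkm p * qkm q)
       (qre p * qim q + qim p * qre q + qjm p * qkm q - qkm p * qjm q)
       (qre p * qjm q - qim p * qkm q + qjm p * qre q + qkm p * qim q)
       (qre p * qkm q + qim p * qjm q - qjm p * qim q + qkm p * qre q).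
Definition qconj (p : quat) : quat := Quat (qre p) (- qim p) (- qjm p) (- qkm p).
Definition qone : quat := Quat 1 0 0 0.
Definition qi : quat := Quat 0 1 0 0.

Definition iso_III n (c : 'I_n -> 'I_n -> 'I_n -> rat) (u : 'rV[rat]_n)
    (T : 'M[rat]_n) (e : nat) (alpha : 'rV[R]_n -> 'I_e -> quat) : Prop :=
  bijective alpha /\
  (forall x y l, alpha (x + y) l = qadd (alpha x l) (alpha y l)) /\
  (forall (r : R) x l, alpha (r *: x) l = qscale r (alpha x l)) /\
  (forall x y l, alpha (amul (cR c) x y) l = qmul (alpha x l) (alpha y l)) /\
  (forall l, alpha (toR u) l = qone) /\
  (forall x l, alpha (x *m toRmx T) l = qconj (alpha x l)).

Definition iso_IV n (c : 'I_n -> 'I_n -> 'I_n -> rat) (u : 'rV[rat]_n)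
    (T : 'M[rat]_n) (e d : nat) (alpha : 'rV[R]_n -> 'I_e -> 'M[R[i]]_d) : Prop :=
  bijective alpha /\
  (forall x y l, alpha (x + y) l = alpha x l + alpha y l) /\
  (forall (r : R) x l, alpha (r *: x) l = (r%:C)%C *: alpha x l) /\
  (forall x y l, alpha (amul (cR c) x y) l = alpha x l *m alpha y l) /\
  (forall l, alpha (toR u) l = 1%:M) /\
  (forall x l, alpha (x *m toRmx T) l = (map_mx (@conjc R) (alpha x l))^T).

End Extension.

(* Weak unitarity lets each basis vector be rescaled on its own: replacing
   [v_j] by [s_j^-1 v_j] turns [a_j = psi(v_j, v_j)] into [s_j^-1 a_j s_j^-dagger].
   Through [alpha], [a_j] is a family of invertible skew elements of [H] (pure
   quaternions) or of [M_d(C)] (skew-Hermitian matrices), and each factor is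
   normalised separately: a pure quaternion [A] equals [S i S^*] with
   [|S|^2 = |A|], and a skew-Hermitian matrix is unitarily diagonalised and then
   rescaled by the square roots of the moduli of its eigenvalues.  In both types
   [Trd(s_j s_j^dagger) = 2 sum_t r_t] and [Trd(a_j a_j^dagger) = 2 sum_t r_t^2]
   for [k e] nonnegative numbers [r_t], so the bound is the Cauchy-Schwarz
   inequality [(sum_t r_t)^2 <= k e sum_t r_t^2]. *)

From HB Require Import structures.
From mathcomp Require Import all_boot all_order all_algebra.
From mathcomp Require Import boolp reals.
From mathcomp Require Import complex.
From mathcomp Require Import ring lra.

Set Implicit Arguments.
Unset Strict Implicit.
Unset Printing Implicit Defensive.

Import Order.TTheory GRing.Theory Num.Theory.
Local Open Scope ring_scope.

Lemma coord_expansion (K : fieldType) (V : lmodType K) (I : finType)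
    (beta : I -> V -> K) (b : I -> V) :
  (forall t x y, beta t (x + y) = beta t x + beta t y) ->
  (forall t r x, beta t (r *: x) = r * beta t x) ->
  (forall x y, (forall t, beta t x = beta t y) -> x = y) ->
  (forall t t', beta t' (b t) = (t == t')%:R) ->
  forall x, x = \sum_t beta t x *: b t.
Proof.
move=> betaD betaZ beta_inj betab x; apply: beta_inj => t'.
have beta0 : beta t' 0 = 0 by rewrite -(scale0r 0) betaZ mul0r.
rewrite (big_morph _ (betaD t') beta0) (bigD1 t') //= betaZ betab eqxx mulr1.
by rewrite big1 ?addr0 // => t /negbTE tt'; rewrite betaZ betab tt' mulr0.
Qed.

Section StructureConstants.
Variables (K : fieldType) (n : nat) (c : 'I_n -> 'I_n -> 'I_n -> K).
Local Notation mul := (amul c).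

Lemma amulDl x y z : mul (x + y) z = mul x z + mul y z.
Proof.
apply/rowP => k; rewrite !mxE -big_split /=; apply: eq_bigr => i _.
by rewrite -big_split /=; apply: eq_bigr => j _; rewrite !mxE; ring.
Qed.

Lemma amulDr x y z : mul x (y + z) = mul x y + mul x z.
Proof.
apply/rowP => k; rewrite !mxE -big_split /=; apply: eq_bigr => i _.
by rewrite -big_split /=; apply: eq_bigr => j _; rewrite !mxE; ring.
Qed.

Lemma amulZl (r : K) x y : mul (r *: x) y = r *: mul x y.
Proof.
apply/rowP => k; rewrite !mxE mulr_sumr; apply: eq_bigr => i _.
by rewrite mulr_sumr; apply: eq_bigr => j _; rewrite !mxE; ring.
Qed.

Lemma amulZr (r : K) x y : mul x (r *: y) = r *: mul x y.
Proof.
apply/rowP => k; rewrite !mxE mulr_sumr; apply: eq_bigr => i _.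
by rewrite mulr_sumr; apply: eq_bigr => j _; rewrite !mxE; ring.
Qed.

Lemma amul0l x : mul 0 x = 0.
Proof. by rewrite -(scale0r 0) amulZl !scale0r. Qed.

Lemma amul0r x : mul x 0 = 0.
Proof. by rewrite -(scale0r 0) amulZr !scale0r. Qed.

Lemma amulNl x y : mul (- x) y = - mul x y.
Proof. by rewrite -scaleN1r amulZl scaleN1r. Qed.

Lemma amul_suml (I : Type) (r : seq I) (P : pred I) (F : I -> 'rV[K]_n) y :
  mul (\sum_(i <- r | P i) F i) y = \sum_(i <- r | P i) mul (F i) y.
Proof. exact: (big_morph (mul^~ y) (fun a b => amulDl a b y) (amul0l y)). Qed.

Lemma amul_sumr (I : Type) (r : seq I) (P : pred I) (F : I -> 'rV[K]_n) x :
  mul x (\sum_(i <- r | P i) F i) = \sum_(i <- r | P i) mul x (F i).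
Proof. exact: (big_morph (mul x) (amulDr x) (amul0r x)). Qed.

Lemma regtr_dual_basis (I : finType) (beta : I -> 'rV[K]_n -> K)
    (b : I -> 'rV[K]_n) :
  (forall t x y, beta t (x + y) = beta t x + beta t y) ->
  (forall t r x, beta t (r *: x) = r * beta t x) ->
  (forall x, x = \sum_t beta t x *: b t) ->
  forall a, regtr c a = \sum_t beta t (mul a (b t)).
Proof.
move=> betaD betaZ coordK a.
have beta0 t : beta t 0 = 0 by rewrite -(scale0r 0) betaZ mul0r.
have -> : regtr c a = \sum_(i < n) mul a (delta_mx 0 i) 0 i.
  apply: eq_bigr => i _; rewrite mxE; apply: eq_bigr => j _.
  rewrite (bigD1 i) //= big1 ?addr0 => [|k /negbTE ki]; rewrite !mxE ?ki.
    by rewrite !eqxx mulr1.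
  by rewrite andbF mulr0 mul0r.
under eq_bigr => i _ do rewrite {1}(coordK (delta_mx 0 i)) amul_sumr summxE.
rewrite exchange_big; apply: eq_bigr => t _.
rewrite [in RHS](row_sum_delta (mul a (b t))) (big_morph _ (betaD t) (beta0 t)).
by apply: eq_bigr => i _; rewrite amulZr mxE betaZ mulrC.
Qed.

End StructureConstants.

Section UnitalAlgebra.
Variables (K : fieldType) (n : nat) (c : 'I_n -> 'I_n -> 'I_n -> K) (u : 'rV[K]_n).
Hypothesis cA : assoc_unital c u.
Local Notation mul := (amul c).

Lemma amulA x y z : mul (mul x y) z = mul x (mul y z).
Proof. by case: cA => ->. Qed.

Lemma amul1l x : mul u x = x.
Proof. by case: cA => _ /(_ x) []. Qed.

Lemma amul1r x : mul x u = x.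
Proof. by case: cA => _ /(_ x) []. Qed.

Lemma sum_amul_stdvec m (x : vec K n m) i :
  \sum_(k < m) mul (x k) (stdvec u k i) = x i.
Proof.
rewrite (bigD1 i) //= big1 ?addr0 => [|k /negbTE ki].
  by rewrite /stdvec eqxx amul1r.
by rewrite /stdvec eq_sym ki amul0r.
Qed.

Lemma basis_smul_units m (v : 'I_m -> vec K n m) (s sinv : 'I_m -> 'rV[K]_n) :
  (forall j, mul (s j) (sinv j) = u /\ mul (sinv j) (s j) = u) ->
  is_basis c v -> is_basis c (fun j => smul c (sinv j) (v j)).
Proof.
move=> sK [vspan vfree]; split=> [x | a a0 j].
  have [a xa] := vspan x; exists (fun j => mul (a j) (s j)) => i.
  by rewrite xa; apply: eq_bigr => j _; rewrite /smul amulA -(amulA (s j)) (proj1 (sK j)) amul1l.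
have /vfree/(_ j) aj0 : forall i, lincomb c (fun j => mul (a j) (sinv j)) v i = 0.
  by move=> i; rewrite -(a0 i); apply: eq_bigr => k _; rewrite amulA.
by rewrite -[a j]amul1r -(proj2 (sK j)) -amulA aj0 amul0l.
Qed.

End UnitalAlgebra.

Section SkewHermitianForm.
Variables (K : fieldType) (n m : nat) (c : 'I_n -> 'I_n -> 'I_n -> K)
  (u : 'rV[K]_n) (T : 'M[K]_n) (psi : vec K n m -> vec K n m -> 'rV[K]_n).
Hypothesis cA : assoc_unital c u.
Hypothesis TI : involution c T.
Hypothesis psiS : skew_hermitian_nondeg c T psi.
Local Notation mul := (amul c).
Local Notation dag x := ((x : 'rV[K]_n) *m T).

Lemma dagM x y : dag (mul x y) = mul (dag y) (dag x).
Proof. by case: TI. Qed.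

Lemma dagK x : dag (dag x) = x.
Proof. by case: TI. Qed.

Lemma dag1 : dag u = u.
Proof. by rewrite -[LHS](amul1r cA) -[X in mul _ X]dagK -dagM (amul1r cA) dagK. Qed.

Lemma smul1 (x : vec K n m) : smul c u x = x.
Proof. by apply: funext => i; rewrite /smul amul1l. Qed.

Lemma psi_smull a x y : psi (smul c a x) y = mul a (psi x y).
Proof.
by case: psiS => _ [_ [psiZ _]]; rewrite -[y in LHS]smul1 psiZ dag1 (amul1r cA).
Qed.

Lemma psi_smulr x b y : psi x (smul c b y) = mul (psi x y) (dag b).
Proof.
by case: psiS => _ [_ [psiZ _]]; rewrite -[x in LHS]smul1 psiZ (amul1l cA).
Qed.

Lemma psi_dag x y : dag (psi x y) = - psi y x.
Proof. by case: psiS => _ [_ [_ [skew _]]]; rewrite (skew x y) opprK. Qed.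

Lemma psi_suml (I : Type) (r : seq I) (F : I -> vec K n m) y :
  psi (fun i => \sum_(j <- r) F j i) y = \sum_(j <- r) psi (F j) y.
Proof.
elim: r => [|j r IHr].
  have -> : (fun i => \sum_(j <- [::]) F j i) = smul c 0 y.
    by apply: funext => i; rewrite big_nil /smul amul0l.
  by rewrite psi_smull amul0l big_nil.
rewrite big_cons -IHr; case: psiS => <- _; congr psi.
by apply: funext => i; rewrite big_cons.
Qed.

Lemma psi_sumr (I : Type) (r : seq I) (F : I -> vec K n m) x :
  psi x (fun i => \sum_(j <- r) F j i) = \sum_(j <- r) psi x (F j).
Proof.
elim: r => [|j r IHr].
  have -> : (fun i => \sum_(j <- [::]) F j i) = smul c 0 x.
    by apply: funext => i; rewrite big_nil /smul amul0l.
  by rewrite psi_smulr mul0mx amul0r big_nil.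
rewrite big_cons -IHr; case: psiS => _ [<- _]; congr psi.
by apply: funext => i; rewrite big_cons.
Qed.

Lemma psi_expand x y :
  psi x y = \sum_(i < m) \sum_(k < m)
     mul (x i) (mul (psi (stdvec u i) (stdvec u k)) (dag (y k))).
Proof.
have stdvecE (z : vec K n m) : z = (fun i => \sum_(k < m) smul c (z k) (stdvec u k) i).
  by apply: funext => i; rewrite (sum_amul_stdvec cA).
rewrite {1}[x]stdvecE psi_suml; apply: eq_bigr => i _.
rewrite {1}[y]stdvecE psi_sumr; apply: eq_bigr => k _.
by case: psiS => _ [_ [-> _]].
Qed.

Variable v : 'I_m -> vec K n m.
Hypotheses (vB : is_basis c v) (vW : weakly_unitary psi v) (u_neq0 : u != 0).

Lemma basis_neq0 j : exists i, v j i != 0.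
Proof.
apply/existsP; apply: contraT; rewrite negb_exists => /forallP v0.
have : (fun k => if k == j then u else 0) j = 0.
  case: vB => _ /(_ (fun k => if k == j then u else 0)); apply=> i.
  rewrite /lincomb (bigD1 j) //= big1 ?addr0 => [|k /negbTE ->]; last by rewrite amul0l.
  by rewrite eqxx (amul1l cA); apply/eqP; rewrite -[_ == _]negbK v0.
by rewrite /= eqxx => u0; move: u_neq0; rewrite u0 eqxx.
Qed.

(* Non-degeneracy gives [y] with [psi (v j) y != 0]; expanding [y] in the basis,
   weak unitarity leaves only the [v j] term. *)
Lemma psi_basis_neq0 j : psi (v j) (v j) != 0.
Proof.
case: psiS => _ [_ [_ [_ /(_ (v j) (basis_neq0 j)) [y]]]].
case: vB => /(_ y) [b yb] _.
have -> : y = (fun i => \sum_(k < m) smul c (b k) (v k) i).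
  by apply: funext => i; rewrite yb.
rewrite psi_sumr (bigD1 j) //= big1 => [|k kj]; last first.
  by rewrite psi_smulr vW 1?eq_sym // amul0l.
by rewrite addr0 psi_smulr; apply: contraNneq => ->; rewrite amul0l.
Qed.

End SkewHermitianForm.

Lemma basis_coef_inverse (K : fieldType) (n m : nat) (c : 'I_n -> 'I_n -> 'I_n -> K)
    (u : 'rV[K]_n) (v : 'I_m -> vec K n m) (A : 'I_m -> 'I_m -> 'rV[K]_n) :
  assoc_unital c u -> is_basis c v ->
  (forall k i, stdvec u k i = \sum_(j < m) amul c (A k j) (v j i)) ->
  forall j0 j, \sum_(i < m) amul c (v j0 i) (A i j) = if j == j0 then u else 0.
Proof.
move=> cA [_ vfree] vA j0 j; apply/eqP; rewrite -subr_eq0; apply/eqP; move: j.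
apply: vfree => i; rewrite /lincomb.
under eq_bigr => j _ do rewrite amulDl amul_suml amulNl.
rewrite sumrB exchange_big /=.
have -> : \sum_(j < m) amul c (if j == j0 then u else 0) (v j i) = v j0 i.
  rewrite (bigD1 j0) //= eqxx (amul1l cA) big1 ?addr0 // => k kj0.
  by rewrite (negbTE kj0) amul0l.
rewrite -[X in _ - X](sum_amul_stdvec cA); apply/eqP; rewrite subr_eq0; apply/eqP.
by apply: eq_bigr => k _; rewrite vA amul_sumr; apply: eq_bigr => j _; rewrite (amulA cA).
Qed.

Section ScalarExtension.
Variables (R : realType) (n m : nat) (c : 'I_n -> 'I_n -> 'I_n -> rat) (u : 'rV[rat]_n)
  (T : 'M[rat]_n) (psi : vec rat n m -> vec rat n m -> 'rV[rat]_n).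
Local Notation mulR := (amul (cR R c)).
Local Notation toR := (@toR R n).
Local Notation dagR x := ((x : 'rV[R]_n) *m toRmx R T).

Lemma toR0 : toR 0 = 0.
Proof. exact: map_mx0. Qed.

Lemma toR_sum (I : Type) (r : seq I) (F : I -> 'rV[rat]_n) :
  toR (\sum_(i <- r) F i) = \sum_(i <- r) toR (F i).
Proof. exact: raddf_sum. Qed.

Lemma toRM x y : toR (amul c x y) = mulR (toR x) (toR y).
Proof.
apply/rowP => k; rewrite !mxE rmorph_sum; apply: eq_bigr => i _.
by rewrite rmorph_sum; apply: eq_bigr => j _; rewrite !mxE !rmorphM.
Qed.

Lemma toR_dag x : toR (x *m T) = dagR (toR x).
Proof. exact: map_mxM. Qed.

Lemma toR_stdvec (k i : 'I_m) : toR (stdvec u k i) = stdvec (toR u) k i.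
Proof. by rewrite /stdvec; case: eqP => // _; apply: toR0. Qed.

Hypotheses (cA : assoc_unital c u) (TI : involution c T)
  (psiS : skew_hermitian_nondeg c T psi).

Lemma psiR_vecR x y : psiR c u T psi (vecR R x) (vecR R y) = toR (psi x y).
Proof.
rewrite (psi_expand cA TI psiS) toR_sum; apply: eq_bigr => i _.
by rewrite toR_sum; apply: eq_bigr => k _; rewrite !toRM toR_dag.
Qed.

Hypotheses (cAR : assoc_unital (cR R c) (toR u))
  (TIR : involution (cR R c) (toRmx R T)).

Lemma psiR_smul a b x y :
  psiR c u T psi (smul (cR R c) a x) (smul (cR R c) b y) =
  mulR a (mulR (psiR c u T psi x y) (dagR b)).
Proof.
rewrite /psiR amul_suml amul_sumr; apply: eq_bigr => i _.
rewrite amul_suml amul_sumr; apply: eq_bigr => k _.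
by rewrite /smul (dagM TIR) !(amulA cAR).
Qed.

Lemma basis_vecR (v : 'I_m -> vec rat n m) :
  is_basis c v -> is_basis (cR R c) (fun j => vecR R (v j)).
Proof.
move=> vB; have [A vA] := choice (fun k => proj1 vB (stdvec u k)).
have vAK := basis_coef_inverse cA vB vA.
split=> [x | b b0 j0].
  exists (fun j => \sum_(k < m) mulR (x k) (toR (A k j))) => i.
  rewrite /lincomb; under eq_bigr => j _ do rewrite amul_suml.
  rewrite exchange_big -[LHS](sum_amul_stdvec cAR); apply: eq_bigr => k _.
  rewrite -toR_stdvec vA toR_sum amul_sumr; apply: eq_bigr => j _.
  by rewrite toRM (amulA cAR).
have -> : b j0 = \sum_(j < m) mulR (b j) (toR (if j0 == j then u else 0)).
  rewrite (bigD1 j0) //= eqxx big1 ?addr0 ?(amul1r cAR) // => j /negbTE.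
  by rewrite eq_sym => ->; rewrite toR0 amul0r.
under eq_bigr => j _ do rewrite -vAK toR_sum amul_sumr.
rewrite exchange_big big1 // => i _.
under eq_bigr => j _ do rewrite toRM -(amulA cAR).
by move: (b0 i); rewrite /lincomb -amul_suml => ->; rewrite amul0l.
Qed.

Variable v : 'I_m -> vec rat n m.
Hypotheses (vB : is_basis c v) (vW : weakly_unitary psi v).

Lemma normal_basis (s sinv : 'I_m -> 'rV[R]_n) :
  (forall j, mulR (s j) (sinv j) = toR u /\ mulR (sinv j) (s j) = toR u) ->
  let w j := smul (cR R c) (sinv j) (vecR R (v j)) in
  [/\ is_basis (cR R c) w, weakly_unitary (psiR c u T psi) w &
      forall j, psiR c u T psi (w j) (w j) =
                mulR (sinv j) (mulR (toR (psi (v j) (v j))) (dagR (sinv j)))].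
Proof.
move=> sK w; split=> [|i j ij|j]; rewrite /w ?psiR_smul ?psiR_vecR //.
  exact/(basis_smul_units cAR sK)/basis_vecR.
by rewrite vW // toR0 amul0l amul0r.
Qed.

End ScalarExtension.

Lemma sqr_sum_le_card (R : realDomainType) (I : finType) (f : I -> R) :
  (\sum_i f i) ^+ 2 <= #|I|%:R * \sum_i f i ^+ 2.
Proof.
have sumsq : \sum_i \sum_j (f i - f j) ^+ 2 =
             2 * (#|I|%:R * \sum_i f i ^+ 2 - (\sum_i f i) ^+ 2).
  have cardE : \sum_(i : I) \sum_(j : I) f j ^+ 2 = #|I|%:R * \sum_i f i ^+ 2.
    by rewrite sumr_const mulr_natl.
  have cardE' : \sum_(i : I) \sum_(j : I) f i ^+ 2 = #|I|%:R * \sum_i f i ^+ 2.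
    by rewrite mulr_sumr; apply: eq_bigr => i _; rewrite sumr_const mulr_natl.
  have sqrE : \sum_(i : I) \sum_(j : I) f i * f j = (\sum_i f i) ^+ 2.
    by rewrite expr2 mulr_suml; apply: eq_bigr => i _; rewrite mulr_sumr.
  transitivity (\sum_(i : I) \sum_(j : I) f i ^+ 2 + \sum_(i : I) \sum_(j : I) f j ^+ 2
      - 2 * \sum_(i : I) \sum_(j : I) f i * f j); last by rewrite cardE cardE' sqrE; ring.
  rewrite mulr_sumr -big_split -sumrB; apply: eq_bigr => i _ /=.
  by rewrite mulr_sumr -big_split -sumrB; apply: eq_bigr => j _ /=; ring.
have : 0 <= \sum_i \sum_j (f i - f j) ^+ 2 by do 2!apply: sumr_ge0 => ? _; exact: sqr_ge0.
by rewrite sumsq pmulr_rge0 // subr_ge0.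
Qed.

Lemma sqrt_sum_le (R : rcfType) (I : finType) (r : I -> R) :
  (forall t, 0 <= r t) ->
  Num.sqrt (2 * \sum_t r t) <=
  Num.sqrt (Num.sqrt ((2 * #|I|)%N%:R)) * Num.sqrt (Num.sqrt (2 * \sum_t r t ^+ 2)).
Proof.
move=> r_ge0; have S_ge0 : 0 <= \sum_t r t by exact: sumr_ge0.
rewrite -sqrtrM ?sqrtr_ge0 // -sqrtrM ?ler0n // ler_sqrt ?sqrtr_ge0 //.
rewrite -[2 * _](@ger0_norm _ (2 * \sum_t r t)) ?mulr_ge0 // -sqrtr_sqr.
rewrite ler_sqrt ?mulr_ge0 ?ler0n ?sumr_ge0 // => [|t _]; last exact: sqr_ge0.
have -> : (2 * #|I|)%N%:R * (2 * \sum_t r t ^+ 2) = 2 ^+ 2 * (#|I|%:R * \sum_t r t ^+ 2).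
  by rewrite natrM; ring.
by rewrite exprMn ler_pM2l ?exprn_gt0 // sqr_sum_le_card.
Qed.

Definition star_monoid (B : Type) (mul : B -> B -> B) (one : B) (conj : B -> B) :=
  [/\ associative mul, left_id one mul, right_id one mul,
      forall x y, conj (mul x y) = mul (conj y) (conj x) & involutive conj].

Definition star_iso (R : realType) (n : nat) (c : 'I_n -> 'I_n -> 'I_n -> rat)
    (u : 'rV[rat]_n) (T : 'M[rat]_n) (B : Type) (mul : B -> B -> B) (one : B)
    (conj : B -> B) (e : nat) (alpha : 'rV[R]_n -> 'I_e -> B) :=
  [/\ bijective alpha,
      forall x y l, alpha (amul (cR R c) x y) l = mul (alpha x l) (alpha y l),
      forall l, alpha (toR R u) l = one &
      forall x l, alpha (x *m toRmx R T) l = conj (alpha x l)].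

Section StarIsomorphism.
Variables (R : realType) (n m : nat) (c : 'I_n -> 'I_n -> 'I_n -> rat)
  (u : 'rV[rat]_n) (T : 'M[rat]_n) (B : Type) (mul : B -> B -> B) (one : B)
  (conj : B -> B) (e : nat) (alpha : 'rV[R]_n -> 'I_e -> B).
Hypotheses (Bstar : star_monoid mul one conj)
  (alphaI : star_iso c u T mul one conj alpha).
Local Notation mulR := (amul (cR R c)).

Lemma star_iso_inj x y : (forall l, alpha x l = alpha y l) -> x = y.
Proof. by case: alphaI => /bij_inj alpha_inj _ _ _ /funext; apply: alpha_inj. Qed.

Lemma star_iso_assoc_unital : assoc_unital (cR R c) (toR R u).
Proof.
case: Bstar alphaI => mulA mul1 mulr1 _ _ [_ alphaM alpha1 _].
split=> [x y z|x]; last split; apply: star_iso_inj => l;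
  by rewrite !alphaM ?alpha1 ?mulA ?mul1 ?mulr1.
Qed.

Lemma star_iso_involution : involution (cR R c) (toRmx R T).
Proof.
case: Bstar alphaI => _ _ _ conjM conjK [_ alphaM _ alphaC].
by split=> *; apply: star_iso_inj => l; rewrite !(alphaM, alphaC) ?conjM ?conjK.
Qed.

Variables (psi : vec rat n m -> vec rat n m -> 'rV[rat]_n) (v : 'I_m -> vec rat n m).
Hypotheses (cA : assoc_unital c u) (TI : involution c T)
  (psiS : skew_hermitian_nondeg c T psi) (vB : is_basis c v)
  (vW : weakly_unitary psi v).

Lemma star_iso_psi_skew x l :
  conj (alpha (toR R (psi x x)) l) = alpha (- toR R (psi x x)) l.
Proof.
by case: alphaI => _ _ _ <-; rewrite -toR_dag (psi_dag psiS) /toR map_mxN.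
Qed.

Lemma star_iso_psi_unit (cD : division c u) j l :
  exists b, mul (alpha (toR R (psi (v j) (v j))) l) b = one.
Proof.
case: cD => u_neq0 /(_ _ (psi_basis_neq0 cA psiS vB vW u_neq0 j)) [y [psiy _]].
by case: alphaI => _ alphaM alpha1 _; exists (alpha (toR R y) l); rewrite -alphaM -toRM psiy alpha1.
Qed.

Lemma star_iso_normal_basis (g : ('I_e -> B) -> 'rV[R]_n) (S Si : 'I_m -> 'I_e -> B) :
  cancel g alpha ->
  (forall j l, mul (S j l) (Si j l) = one /\ mul (Si j l) (S j l) = one) ->
  (forall j, mulR (g (S j)) (g (Si j)) = toR R u /\
             mulR (g (Si j)) (g (S j)) = toR R u) /\
  let w j := smul (cR R c) (g (Si j)) (vecR R (v j)) in
  [/\ is_basis (cR R c) w, weakly_unitary (psiR c u T psi) w &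
      forall j l, alpha (psiR c u T psi (w j) (w j)) l =
                  mul (Si j l) (mul (alpha (toR R (psi (v j) (v j))) l) (conj (Si j l)))].
Proof.
move=> gK SK; case: alphaI => _ alphaM alpha1 alphaC.
have sK j : mulR (g (S j)) (g (Si j)) = toR R u /\ mulR (g (Si j)) (g (S j)) = toR R u.
  by split; apply: star_iso_inj => l; rewrite alphaM !gK alpha1; case: (SK j l).
split=> // w.
have [wB wW wpsi] := normal_basis cA TI psiS star_iso_assoc_unital star_iso_involution
  vB vW sK.
by split=> // j l; rewrite wpsi !alphaM alphaC gK.
Qed.

End StarIsomorphism.

Section Quaternions.
Variable R : realType.
Local Notation quat := (quat R).
Local Notation Quat := (@Quat R).
Local Notation qi := (qi R).
Local Notation qone := (qone R).

Definition qn2 (q : quat) : R := qre q ^+ 2 + qim q ^+ 2 + qjm q ^+ 2 + qkm q ^+ 2.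

Lemma quat_eq (p q : quat) :
  qre p = qre q -> qim p = qim q -> qjm p = qjm q -> qkm p = qkm q -> p = q.
Proof. by case: p => ????; case: q => ???? /= -> -> -> ->. Qed.

Ltac qring := repeat match goal with q : quat |- _ => case: q => ???? end;
  apply: quat_eq => /=; ring.

Lemma quat_star_monoid : star_monoid (@qmul R) qone (@qconj R).
Proof. by split=> [p q r|p|p|p q|p]; qring. Qed.

Lemma qn2_ge0 q : 0 <= qn2 q.
Proof. by rewrite /qn2 !addr_ge0 ?sqr_ge0. Qed.

Lemma qn2M p q : qn2 (qmul p q) = qn2 p * qn2 q.
Proof. by case: p => ????; case: q => ????; rewrite /qn2 /=; ring. Qed.

Lemma qn2Z (a : R) q : qn2 (qscale a q) = a ^+ 2 * qn2 q.
Proof. by case: q => ????; rewrite /qn2 /=; ring. Qed.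

Lemma qmul_conj (q : quat) : qmul q (qconj q) = Quat (qn2 q) 0 0 0.
Proof. by rewrite /qn2; qring. Qed.

Lemma qconj_scale (a : R) (p q : quat) :
  qmul (qscale a p) (qmul q (qconj (qscale a p))) =
  qscale (a ^+ 2) (qmul p (qmul q (qconj p))).
Proof. qring. Qed.

(* With [r = |x i + y j + z k|]: if [r + x > 0] then
   [S = ((r + x) - z j + y k) / sqrt (2 (r + x))] works; otherwise the
   quaternion is [- r i] and [S = sqrt r j]. *)
Lemma pure_quat_conj_i (x y z : R) :
  exists S, qn2 S = Num.sqrt (qn2 (Quat 0 x y z)) /\
            qmul S (qmul qi (qconj S)) = Quat 0 x y z.
Proof.
set r := Num.sqrt _; have r_ge0 : 0 <= r by exact: sqrtr_ge0.
have rE : r ^+ 2 = x ^+ 2 + y ^+ 2 + z ^+ 2.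
  by rewrite sqr_sqrtr ?qn2_ge0 // /qn2 /=; ring.
have [rx_gt0 | rx_le0] := ltrP 0 (r + x).
  have rx_neq0 : 2 * (r + x) != 0 by rewrite mulf_neq0 ?gt_eqF.
  have k2 : Num.sqrt (2 * (r + x)) ^+ 2 = 2 * (r + x).
    by rewrite sqr_sqrtr // mulr_ge0 // ltW.
  exists (qscale (Num.sqrt (2 * (r + x)))^-1 (Quat (r + x) 0 (- z) y)).
  rewrite qn2Z qconj_scale exprVn k2; split.
    by rewrite /qn2 /=; apply: (mulIf rx_neq0); rewrite mulrAC mulVf //; nra.
  apply: quat_eq => /=; apply: (mulIf rx_neq0); rewrite mulrAC mulVf //; nra.
have rx0 : r + x = 0 by nra.
have /eqP : y ^+ 2 + z ^+ 2 = 0 by nra.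
rewrite paddr_eq0 ?sqr_ge0 // !sqrf_eq0 => /andP [/eqP y0 /eqP z0].
have -> : x = - r by lra.
have [s _ ->] : exists2 s, 0 <= s & r = s ^+ 2.
  by exists (Num.sqrt r); rewrite ?sqrtr_ge0 ?sqr_sqrtr.
exists (Quat 0 0 s 0); rewrite y0 z0.
by split; [rewrite /qn2 /= | apply: quat_eq => /=]; ring.
Qed.

Definition qinv (q : quat) : quat := qscale (qn2 q)^-1 (qconj q).

Lemma pure_quat_normal_form (A : quat) : qre A = 0 -> qn2 A != 0 ->
  exists S, [/\ qmul S (qinv S) = qone, qmul (qinv S) S = qone,
                qmul (qinv S) (qmul A (qconj (qinv S))) = qi &
                qn2 S = Num.sqrt (qn2 A)].
Proof.
case: A => a x y z /= -> A_neq0; have [S [S2 SA]] := pure_quat_conj_i x y z.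
have S_neq0 : qn2 S != 0 by rewrite S2 sqrtr_eq0 -ltNge lt0r A_neq0 qn2_ge0.
exists S; split=> //; rewrite -?SA /qinv;
  by move: S {S2 SA} S_neq0 => [? ? ? ?]; rewrite /qn2 /= => ?; apply: quat_eq => /=; field.
Qed.

Definition qcoord (k : 'I_4) (q : quat) : R :=
  match val k with 0 => qre q | 1 => qim q | 2 => qjm q | _ => qkm q end.

Definition qbasis (k : 'I_4) : quat :=
  match val k with 0 => Quat 1 0 0 0 | 1 => Quat 0 1 0 0
                 | 2 => Quat 0 0 1 0 | _ => Quat 0 0 0 1 end.

Lemma qcoordD k p q : qcoord k (qadd p q) = qcoord k p + qcoord k q.
Proof. by case: k => [[|[|[|[|k]]]] ?]. Qed.

Lemma qcoordZ k a q : qcoord k (qscale a q) = a * qcoord k q.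
Proof. by case: k => [[|[|[|[|k]]]] ?]. Qed.

Lemma qcoord0 k : qcoord k (Quat 0 0 0 0) = 0.
Proof. by case: k => [[|[|[|[|k]]]] ?]. Qed.

Lemma qcoord_basis k k' : qcoord k' (qbasis k) = (k == k')%:R.
Proof. by case: k => [[|[|[|[|k]]]] ?] //; case: k' => [[|[|[|[|k']]]] ?]. Qed.

Lemma qcoord_eq p q : (forall k, qcoord k p = qcoord k q) -> p = q.
Proof.
by move=> pq; apply: quat_eq; [exact: (pq 0) | exact: (pq 1) | exact: (pq 2) | exact: (pq 3)].
Qed.

Lemma quat_trace q : \sum_(k < 4) qcoord k (qmul q (qbasis k)) = 4%:R * qre q.
Proof. by rewrite !big_ord_recr big_ord0 /=; case: q => ????; rewrite /qcoord /=; ring. Qed.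

End Quaternions.

Section TypeIII.
Variables (R : realType) (n : nat) (c : 'I_n -> 'I_n -> 'I_n -> rat) (u : 'rV[rat]_n)
  (T : 'M[rat]_n) (e : nat) (alpha : 'rV[R]_n -> 'I_e -> quat R).
Hypothesis alphaI : iso_III c u T alpha.
Local Notation mulR := (amul (cR R c)).

Lemma iso_III_star : star_iso c u T (@qmul R) (qone R) (@qconj R) alpha.
Proof. by case: alphaI => ? [_ [_ [? [? ?]]]]; split. Qed.

Lemma regtr_quat a : regtr (cR R c) a = \sum_l 4%:R * qre (alpha a l).
Proof.
case: alphaI => [[g _ gK] [alphaD [alphaZ [alphaM _]]]].
pose beta (t : 'I_e * 'I_4) x := qcoord t.2 (alpha x t.1).
pose b (t : 'I_e * 'I_4) := g (fun l => if l == t.1 then qbasis R t.2 else Quat 0 0 0 0).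
have betaD t x y : beta t (x + y) = beta t x + beta t y by rewrite /beta alphaD qcoordD.
have betaZ t r x : beta t (r *: x) = r * beta t x by rewrite /beta alphaZ qcoordZ.
have betab t t' : beta t' (b t) = (t == t')%:R.
  case: t t' => [l k] [l' k']; rewrite /beta /b gK /= xpair_eqE eq_sym.
  by case: (l == l'); [exact: qcoord_basis | exact: qcoord0].
have beta_inj x y : (forall t, beta t x = beta t y) -> x = y.
  by move=> xy; apply: (star_iso_inj iso_III_star) => l; apply: qcoord_eq => k; exact: xy (l, k).
have coordK := coord_expansion betaD betaZ beta_inj betab.
rewrite (regtr_dual_basis (cR R c) betaD betaZ coordK).
rewrite -(pair_bigA _ (fun l k => beta (l, k) (mulR a (b (l, k))))).
apply: eq_bigr => l _; rewrite -quat_trace.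
by apply: eq_bigr => k _; rewrite /beta /b alphaM gK eqxx.
Qed.

Lemma Trd_quat x : Trd (cR R c) 2 (mulR x (x *m toRmx R T)) = 2 * \sum_l qn2 (alpha x l).
Proof.
case: alphaI => _ [_ [_ [alphaM [_ alphaC]]]].
rewrite /Trd regtr_quat mulr_suml mulr_sumr; apply: eq_bigr => l _.
by rewrite alphaM alphaC qmul_conj /=; field.
Qed.

End TypeIII.

Lemma typeIII_normal_basis (R : realType) (n : nat) (c : 'I_n -> 'I_n -> 'I_n -> rat)
    (u : 'rV[rat]_n) (T : 'M[rat]_n) (m : nat)
    (psi : vec rat n m -> vec rat n m -> 'rV[rat]_n) (v : 'I_m -> vec rat n m)
    (e : nat) (alpha : 'rV[R]_n -> 'I_e -> quat R) :
  pos_div_alg c u T 2 -> iso_III c u T alpha ->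
  skew_hermitian_nondeg c T psi -> is_basis c v -> weakly_unitary psi v ->
  exists s sinv : 'I_m -> 'rV[R]_n,
    (forall j, amul (cR R c) (s j) (sinv j) = toR R u /\
               amul (cR R c) (sinv j) (s j) = toR R u) /\
    let w : 'I_m -> vec R n m := fun j => smul (cR R c) (sinv j) (vecR R (v j)) in
    is_basis (cR R c) w /\
    weakly_unitary (psiR c u T psi) w /\
    (forall j l, alpha (psiR c u T psi (w j) (w j)) l = qi R) /\
    (forall j, normD c T 2 (s j) <=
        Num.sqrt (Num.sqrt ((2 * 1 * e)%N%:R)) *
        Num.sqrt (normD c T 2 (toR R (psi (v j) (v j))))).
Proof.
move=> [cA [cD [TI _]]] alphaI psiS vB vW.
have alphaS := iso_III_star alphaI.
case: (alphaI) => [[g _ gK] [_ [alphaZ _]]].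
have A_nf (jl : 'I_m * 'I_e) : exists S, let A := alpha (toR R (psi (v jl.1) (v jl.1))) jl.2 in
    [/\ qmul S (qinv S) = qone R, qmul (qinv S) S = qone R,
        qmul (qinv S) (qmul A (qconj (qinv S))) = qi R & qn2 S = Num.sqrt (qn2 A)].
  case: jl => j l /=; apply: pure_quat_normal_form.
    have := star_iso_psi_skew alphaS psiS (v j) l.
    rewrite -scaleN1r alphaZ; case: (alpha _ l) => ? ? ? ? [] /=; lra.
  have [b /(congr1 (@qn2 R))] := star_iso_psi_unit alphaS cA psiS vB vW cD j l.
  rewrite qn2M => Ab1; apply/eqP => A0; move: Ab1; rewrite A0 mul0r /qn2 /=; nra.
have [S SK] := choice A_nf.
have [sK [wB wW wpsi]] := star_iso_normal_basis (@quat_star_monoid R) alphaS cA TI psiS vB vW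
  (S := fun j l => S (j, l)) (Si := fun j l => qinv (S (j, l))) gK
  (fun j l => let: And4 S1 S2 _ _ := SK (j, l) in conj S1 S2).
exists (fun j => g (fun l => S (j, l))), (fun j => g (fun l => qinv (S (j, l)))).
split=> //; split=> //; split=> //; split=> [j l|j]; first by rewrite wpsi; case: (SK (j, l)).
rewrite /normD !(Trd_quat alphaI) gK.
have -> : (2 * 1 * e)%N = (2 * #|'I_e|)%N by rewrite card_ord muln1.
have -> : \sum_l qn2 (alpha (toR R (psi (v j) (v j))) l) =
          \sum_l Num.sqrt (qn2 (alpha (toR R (psi (v j) (v j))) l)) ^+ 2.
  by apply: eq_bigr => l _; rewrite sqr_sqrtr ?qn2_ge0.
under eq_bigr => l _ do rewrite (let: And4 _ _ _ S2 := SK (j, l) in S2).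
by apply: sqrt_sum_le => l; exact: sqrtr_ge0.
Qed.

Section ComplexMatrices.
Variables (R : realType) (d : nat).
Local Notation C := R[i].
Local Notation cRe := (@complex.Re R).
Local Notation cIm := (@complex.Im R).

Definition ctm (M : 'M[C]_d) : 'M[C]_d := (map_mx (@conjc R) M)^T.

Lemma conjcE (x : C) : conjc x = Num.conj x.
Proof.
rewrite {2}[x]Crect conjC_rect ?Creal_Re ?Creal_Im // -complexRe -complexIm -complexiE.
by case: x => a b; apply/eqP; rewrite eq_complex /=; apply/andP; split; apply/eqP; ring.
Qed.

Lemma ctmE M : ctm M = map_mx Num.conj M^T.
Proof. by apply/matrixP => i j; rewrite !mxE conjcE. Qed.

Lemma ctmM A B : ctm (A *m B) = ctm B *m ctm A.
Proof. by rewrite /ctm map_mxM trmx_mul. Qed.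

Lemma ctmK : involutive ctm.
Proof. by move=> A; apply/matrixP => i j; rewrite !mxE conjcK. Qed.

Lemma ctm_diag (x : 'rV[C]_d) : ctm (diag_mx x) = diag_mx (map_mx (@conjc R) x).
Proof. by rewrite /ctm map_diag_mx tr_diag_mx. Qed.

Lemma matrix_star_monoid : star_monoid (@mulmx C d d d) 1%:M ctm.
Proof. by split=> [A B D|A|A|A B|]; rewrite ?mulmxA ?mul1mx ?mulmx1 ?ctmM //; exact: ctmK. Qed.

Lemma Re_sum (I : Type) (r : seq I) (F : I -> C) :
  cRe (\sum_(i <- r) F i) = \sum_(i <- r) cRe (F i).
Proof. by apply: (big_morph cRe) => // [[? ?] [? ?]]. Qed.

Definition cmx_coord (t : 'I_d * 'I_d * bool) (M : 'M[C]_d) : R :=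
  (if t.2 then cIm else cRe) (M t.1.1 t.1.2).

Definition cmx_basis (t : 'I_d * 'I_d * bool) : 'M[C]_d :=
  (if t.2 then 'i%C else 1) *: delta_mx t.1.1 t.1.2.

Lemma cmx_coordD t A B : cmx_coord t (A + B) = cmx_coord t A + cmx_coord t B.
Proof. by rewrite /cmx_coord mxE; case: t.2; case: (A _ _) => ? ?; case: (B _ _). Qed.

Lemma cmx_coordZ t (a : R) A : cmx_coord t ((a%:C)%C *: A) = a * cmx_coord t A.
Proof. by rewrite /cmx_coord mxE; case: t.2; case: (A _ _) => ? ? /=; ring. Qed.

Lemma cmx_coord0 t : cmx_coord t 0 = 0.
Proof. by rewrite /cmx_coord mxE; case: t.2. Qed.

Lemma cmx_coord_basis t t' : cmx_coord t' (cmx_basis t) = (t == t')%:R.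
Proof.
case: t t' => [[p q] b] [[p' q'] b']; rewrite /cmx_coord /cmx_basis !mxE /= !xpair_eqE.
rewrite (eq_sym p') (eq_sym q'); case: (p == p'); case: (q == q'); case: b; case: b';
  by rewrite /= ?(mulr0, mulr1); ring.
Qed.

Lemma cmx_coord_eq A B : (forall t, cmx_coord t A = cmx_coord t B) -> A = B.
Proof.
move=> AB; apply/matrixP => p q; have := AB (p, q, false); have := AB (p, q, true).
by rewrite /cmx_coord /=; case: (A p q) (B p q) => ? ? [? ?] /= -> ->.
Qed.

Lemma cmx_trace A :
  \sum_t cmx_coord t (A *m cmx_basis t) = (2 * d)%:R * cRe (\tr A).
Proof.
rewrite -(pair_bigA _ (fun pq b => cmx_coord (pq, b) (A *m cmx_basis (pq, b)))) /=.
rewrite -(pair_bigA _ (fun p q => \sum_b cmx_coord (p, q, b) (A *m cmx_basis (p, q, b)))).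
rewrite /mxtrace Re_sum mulr_sumr; apply: eq_bigr => p _ /=.
have entry q b : (A *m cmx_basis (p, q, b)) p q = (if b then 'i%C else 1) * A p p.
  rewrite /cmx_basis !mxE (bigD1 p) //= big1 ?addr0 => [|k /negbTE kp].
    by rewrite !mxE !eqxx mulr1 mulrC.
  by rewrite !mxE kp !mulr0.
under eq_bigr => q _ do rewrite big_bool /cmx_coord /= !entry.
rewrite sumr_const card_ord -mulr_natl natrM mul1r.
by case: (A p p) => ? ? /=; ring.
Qed.


Lemma ctmZ a A : ctm (a *: A) = conjc a *: ctm A.
Proof. by apply/matrixP => i j; rewrite !mxE rmorphM. Qed.

Definition rdiag (x : 'I_d -> R) : 'M[C]_d := diag_mx (\row_k (x k)%:C%C).

Lemma rdiagM x y : rdiag x *m rdiag y = rdiag (fun k => x k * y k).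
Proof. by rewrite mulmx_diag; congr diag_mx; apply/rowP => k; rewrite !mxE -rmorphM. Qed.

Lemma rdiag1 : rdiag (fun _ => 1) = 1%:M.
Proof. by rewrite -diag_const_mx; congr diag_mx; apply/rowP => k; rewrite !mxE. Qed.

Lemma ctm_rdiag x : ctm (rdiag x) = rdiag x.
Proof. by rewrite ctm_diag; congr diag_mx; apply/rowP => k; rewrite !mxE conjc_real. Qed.

Lemma Re_tr_rdiag x : cRe (\tr (rdiag x)) = \sum_k x k.
Proof. by rewrite mxtrace_diag Re_sum; apply: eq_bigr => k _; rewrite mxE. Qed.

Lemma skew_spectral (A : 'M[C]_d) : ctm A = - A ->
  exists P, exists mu : 'I_d -> R,
    [/\ P *m ctm P = 1%:M, ctm P *m P = 1%:M & A = ctm P *m ('i%C *: rdiag mu) *m P].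
Proof.
move=> skewA; set P := spectralmx A; set sg := spectral_diag A.
have Pu : P \is unitarymx := spectral_unitarymx A.
have PPt : P *m ctm P = 1%:M by rewrite ctmE; apply/unitarymxP.
have PtP : ctm P *m P = 1%:M by rewrite ctmE -invmx_unitary // mulVmx // unitarymx_unit.
have A_normal : A \is normalmx by apply/normalmxP; rewrite -!ctmE skewA mulmxN mulNmx.
have AE : A = ctm P *m diag_mx sg *m P.
  by move/orthomx_spectralP: A_normal; rewrite invmx_unitary // -ctmE.
have sg_imag k : cRe (sg 0 k) = 0.
  have DE : diag_mx sg = P *m A *m ctm P.
    by rewrite AE !mulmxA PPt mul1mx -mulmxA PPt mulmx1.
  have /(congr1 (fun M : 'M[C]_d => M k k)) : ctm (diag_mx sg) = - diag_mx sg.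
    by rewrite DE !ctmM ctmK skewA mulNmx mulmxN mulmxA.
  by rewrite ctm_diag !mxE eqxx !mulr1n; case: (sg 0 k) => a b /= [] /eqP; lra.
exists P, (fun k => cIm (sg 0 k)); split=> //; rewrite {1}AE; congr (_ *m _ *m _).
apply/matrixP => a b; rewrite !mxE; case: eqP => [->|_]; last by rewrite !mulr0n mulr0.
rewrite !mulr1n; case: (sg 0 b) (sg_imag b) => ? ? /= ->.
by apply/eqP; rewrite eq_complex /=; apply/andP; split; apply/eqP; ring.
Qed.


Lemma mxtrace_unitary_conj P M : P *m ctm P = 1%:M -> \tr (ctm P *m M *m P) = \tr M.
Proof. by move=> PPt; rewrite mxtrace_mulC mulmxA PPt mul1mx. Qed.

(* With [A = P^* (i diag mu) P], the rescaling [S = P^* diag (sqrt |mu|)]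
   normalises [A] to [i diag (sign mu)]. *)
Lemma skew_matrix_normal_form (A : 'M[C]_d) : ctm A = - A -> (exists B, A *m B = 1%:M) ->
  exists S, exists r : 'I_d -> R,
  [/\ S \in unitmx,
      forall a b, a != b -> (invmx S *m (A *m ctm (invmx S))) a b = 0,
      forall a, (invmx S *m (A *m ctm (invmx S))) a a = 'i%C \/
                (invmx S *m (A *m ctm (invmx S))) a a = - 'i%C,
      forall k, 0 <= r k &
      cRe (\tr (S *m ctm S)) = \sum_k r k /\ cRe (\tr (A *m ctm A)) = \sum_k r k ^+ 2].
Proof.
move=> skewA [B AB]; have [P [mu [PPt PtP AE]]] := skew_spectral skewA.
have mu_neq0 k : mu k != 0.
  have : ('i%C *: rdiag mu) *m (P *m B *m ctm P) = 1%:M.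
    have -> : 'i%C *: rdiag mu = P *m A *m ctm P.
      by rewrite AE !mulmxA PPt mul1mx -mulmxA PPt mulmx1.
    by rewrite -!mulmxA (mulmxA (ctm P)) PtP mul1mx (mulmxA A) AB mul1mx PPt.
  move/(congr1 (fun M : 'M[C]_d => M k k)); rewrite -scalemxAl mul_diag_mx !mxE eqxx.
  by apply: contra_eqN => /eqP ->; rewrite rmorph0 mul0r mulr0 eq_sym oner_eq0.
pose r k := `|mu k|; pose rho k := Num.sqrt (r k).
have rho2 k : rho k * rho k = r k by rewrite -expr2 sqr_sqrtr ?normr_ge0.
have rho_neq0 k : rho k != 0 by rewrite sqrtr_eq0 -ltNge normr_gt0.
pose L := rdiag rho; pose Li := rdiag (fun k => (rho k)^-1).
have LLi : L *m Li = 1%:M.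
  by rewrite rdiagM -rdiag1; congr rdiag; apply: funext => k; exact: mulfV.
have SK : (ctm P *m L) *m (Li *m P) = 1%:M.
  by rewrite mulmxA -(mulmxA _ L) LLi mulmx1 PtP.
have S_unit := proj1 (mulmx1_unit SK).
exists (ctm P *m L), r.
have -> : invmx (ctm P *m L) = Li *m P.
  by rewrite -[LHS]mulmx1 -SK (mulmxA (invmx _)) mulVmx ?mul1mx.
have -> : Li *m P *m (A *m ctm (Li *m P)) = 'i%C *: rdiag (fun k => mu k / r k).
  rewrite AE ctmM ctm_rdiag -!mulmxA !(mulmxA P (ctm P)) PPt !mul1mx -scalemxAl.
  by rewrite -scalemxAr !rdiagM; congr (_ *: rdiag _); apply: funext => k; rewrite -rho2; field.
split=> // [a b ab|a|k|].
- by rewrite !mxE (negbTE ab) mulr0n mulr0.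
- rewrite !mxE eqxx mulr1n /r; have [mu_gt0|mu_le0] := ltrP 0 (mu a).
    by left; rewrite gtr0_norm // divff ?gt_eqF // rmorph1 mulr1.
  by right; rewrite ler0_norm // invrN mulrN divff // rmorphN1 mulrN1.
- exact: normr_ge0.
have iiC : 'i%C * conjc 'i%C = 1 :> C.
  by apply/eqP; rewrite eq_complex /=; apply/andP; split; apply/eqP; ring.
split.
  rewrite ctmM ctmK ctm_rdiag mulmxA -(mulmxA (ctm P) L) mxtrace_unitary_conj // rdiagM.
  by rewrite Re_tr_rdiag; apply: eq_bigr => k _; rewrite rho2.
rewrite AE !ctmM ctmK -!mulmxA (mulmxA P (ctm P)) PPt mul1mx (mulmxA (_ *: _)) mulmxA.
rewrite mxtrace_unitary_conj // ctmZ ctm_rdiag -scalemxAl -scalemxAr scalerA iiC scale1r.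
by rewrite rdiagM Re_tr_rdiag; apply: eq_bigr => k _; rewrite /r real_normK ?num_real.
Qed.

End ComplexMatrices.

Arguments ctm {R d} M.
Arguments cmx_coord {R d} t M.
Arguments cmx_basis {R d} t.
Arguments cmx_coord0 {R d} t.

Section TypeIV.
Variables (R : realType) (n : nat) (c : 'I_n -> 'I_n -> 'I_n -> rat) (u : 'rV[rat]_n)
  (T : 'M[rat]_n) (e d : nat) (alpha : 'rV[R]_n -> 'I_e -> 'M[R[i]]_d).
Hypothesis alphaI : iso_IV c u T alpha.
Local Notation mulR := (amul (cR R c)).
Local Notation cRe := (@complex.Re R).

Lemma iso_IV_star : star_iso c u T (@mulmx _ d d d) 1%:M ctm alpha.
Proof. by case: alphaI => ? [_ [_ [? [? ?]]]]; split. Qed.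

Lemma regtr_matrix a : regtr (cR R c) a = \sum_l (2 * d)%:R * cRe (\tr (alpha a l)).
Proof.
case: alphaI => [[g _ gK] [alphaD [alphaZ [alphaM _]]]].
pose beta (t : 'I_e * ('I_d * 'I_d * bool)) x := cmx_coord t.2 (alpha x t.1).
pose b (t : 'I_e * ('I_d * 'I_d * bool)) := g (fun l => if l == t.1 then cmx_basis t.2 else 0).
have betaD t x y : beta t (x + y) = beta t x + beta t y by rewrite /beta alphaD cmx_coordD.
have betaZ t r x : beta t (r *: x) = r * beta t x by rewrite /beta alphaZ cmx_coordZ.
have betab t t' : beta t' (b t) = (t == t')%:R.
  case: t t' => [l k] [l' k']; rewrite /beta /b gK /= xpair_eqE eq_sym.
  by case: (l == l'); [exact: cmx_coord_basis | exact: cmx_coord0].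
have beta_inj x y : (forall t, beta t x = beta t y) -> x = y.
  by move=> xy; apply: (star_iso_inj iso_IV_star) => l; apply: cmx_coord_eq => k; exact: xy (l, k).
have coordK := coord_expansion betaD betaZ beta_inj betab.
rewrite (regtr_dual_basis (cR R c) betaD betaZ coordK).
rewrite -(pair_bigA _ (fun l k => beta (l, k) (mulR a (b (l, k))))).
apply: eq_bigr => l _; rewrite -cmx_trace.
by apply: eq_bigr => k _; rewrite /beta /b alphaM gK eqxx.
Qed.

Lemma Trd_matrix x : d != 0%N ->
  Trd (cR R c) d (mulR x (x *m toRmx R T)) =
  2 * \sum_l cRe (\tr (alpha x l *m ctm (alpha x l))).
Proof.
case: alphaI => _ [_ [_ [alphaM [_ alphaC]]]] d_neq0.
rewrite /Trd regtr_matrix mulr_suml mulr_sumr; apply: eq_bigr => l _.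
by rewrite alphaM alphaC natrM; field; rewrite pnatr_eq0.
Qed.

End TypeIV.

Lemma typeIV_normal_basis (R : realType) (n : nat) (c : 'I_n -> 'I_n -> 'I_n -> rat)
    (u : 'rV[rat]_n) (T : 'M[rat]_n) (m : nat)
    (psi : vec rat n m -> vec rat n m -> 'rV[rat]_n) (v : 'I_m -> vec rat n m)
    (e d : nat) (alpha : 'rV[R]_n -> 'I_e -> 'M[R[i]]_d) :
  pos_div_alg c u T d -> iso_IV c u T alpha ->
  skew_hermitian_nondeg c T psi -> is_basis c v -> weakly_unitary psi v ->
  exists s sinv : 'I_m -> 'rV[R]_n,
    (forall j, amul (cR R c) (s j) (sinv j) = toR R u /\
               amul (cR R c) (sinv j) (s j) = toR R u) /\
    let w : 'I_m -> vec R n m := fun j => smul (cR R c) (sinv j) (vecR R (v j)) in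
    is_basis (cR R c) w /\
    weakly_unitary (psiR c u T psi) w /\
    (forall j l a b,
       (a != b -> alpha (psiR c u T psi (w j) (w j)) l a b = 0) /\
       (alpha (psiR c u T psi (w j) (w j)) l a a = 'i%C \/
        alpha (psiR c u T psi (w j) (w j)) l a a = - 'i%C)) /\
    (forall j, normD c T d (s j) <=
        Num.sqrt (Num.sqrt ((2 * d * e)%N%:R)) *
        Num.sqrt (normD c T d (toR R (psi (v j) (v j))))).
Proof.
move=> [cA [[u_neq0 cD] [TI _]]] alphaI psiS vB vW.
have alphaS := iso_IV_star alphaI.
case: (alphaI) => [[g _ gK] [alphaD _]].
have d_neq0 : d != 0%N.
  apply: contra_neq u_neq0 => d0; apply/eqP; rewrite -(map_mx_eq0 (ratr : rat -> R)).
  apply/eqP/(star_iso_inj alphaS) => l; apply/matrixP => p.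
  by exfalso; case: p => k; rewrite d0.
have alphaN x l : alpha (- x) l = - alpha x l.
  by case: alphaI => _ [_ [alphaZ _]]; rewrite -scaleN1r alphaZ rmorphN1 scaleN1r.
have A_nf (jl : 'I_m * 'I_e) := skew_matrix_normal_form
  (etrans (star_iso_psi_skew alphaS psiS (v jl.1) jl.2) (alphaN _ _))
  (star_iso_psi_unit alphaS cA psiS vB vW (conj u_neq0 cD) jl.1 jl.2).
have [S /choice [r rK]] := choice A_nf.
have S_unit jl : S jl \in unitmx by case: (rK jl).
have [sK [wB wW wpsi]] := star_iso_normal_basis (matrix_star_monoid R d) alphaS
  cA TI psiS vB vW (S := fun j l => S (j, l)) (Si := fun j l => invmx (S (j, l))) gK
  (fun j l => conj (mulmxV (S_unit (j, l))) (mulVmx (S_unit (j, l)))).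
exists (fun j => g (fun l => S (j, l))), (fun j => g (fun l => invmx (S (j, l)))).
split=> //; split=> //; split=> //; split=> [j l a b|j].
  by rewrite wpsi; case: (rK (j, l)) => _ offdiag diag _ _; split; [exact: offdiag | exact: diag].
rewrite /normD !(Trd_matrix alphaI _ d_neq0) gK.
under eq_bigr => l _ do rewrite (let: And5 _ _ _ _ (conj trS _) := rK (j, l) in trS).
under [X in _ <= _ * Num.sqrt (Num.sqrt (2 * X))]eq_bigr => l _
  do rewrite (let: And5 _ _ _ _ (conj _ trA) := rK (j, l) in trA).
rewrite !pair_bigA /=.
have -> : (2 * d * e)%N = (2 * #|{: 'I_e * 'I_d}|)%N.
  by rewrite card_prod !card_ord [(e * d)%N]mulnC mulnA.
by apply: sqrt_sum_le => t; case: (rK (j, t.1)) => _ _ _ /(_ t.2).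
Qed.

Unset Implicit Arguments.

Theorem lemma2p17 (R : realType) (n : nat) (c : 'I_n -> 'I_n -> 'I_n -> rat)
    (u : 'rV[rat]_n) (T : 'M[rat]_n) (m : nat)
    (psi : vec rat n m -> vec rat n m -> 'rV[rat]_n) (v : 'I_m -> vec rat n m) :
  (* Type III *)
  (forall (e : nat) (alpha : 'rV[R]_n -> 'I_e -> quat R),
     pos_div_alg c u T 2 -> iso_III c u T alpha ->
     skew_hermitian_nondeg c T psi -> is_basis c v -> weakly_unitary psi v ->
     exists s sinv : 'I_m -> 'rV[R]_n,
       (forall j, amul (cR R c) (s j) (sinv j) = toR R u /\
                  amul (cR R c) (sinv j) (s j) = toR R u) /\
       let w : 'I_m -> vec R n m := fun j => smul (cR R c) (sinv j) (vecR R (v j)) in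
       is_basis (cR R c) w /\
       weakly_unitary (psiR c u T psi) w /\
       (forall j l, alpha (psiR c u T psi (w j) (w j)) l = qi R) /\
       (forall j, normD c T 2 (s j) <=
           Num.sqrt (Num.sqrt ((2 * 1 * e)%N%:R)) *
           Num.sqrt (normD c T 2 (toR R (psi (v j) (v j)))))) /\
  (* Type IV *)
  (forall (e d : nat) (alpha : 'rV[R]_n -> 'I_e -> 'M[R[i]]_d),
     pos_div_alg c u T d -> iso_IV c u T alpha ->
     skew_hermitian_nondeg c T psi -> is_basis c v -> weakly_unitary psi v ->
     exists s sinv : 'I_m -> 'rV[R]_n,
       (forall j, amul (cR R c) (s j) (sinv j) = toR R u /\
                  amul (cR R c) (sinv j) (s j) = toR R u) /\
       let w : 'I_m -> vec R n m := fun j => smul (cR R c) (sinv j) (vecR R (v j)) in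
       is_basis (cR R c) w /\
       weakly_unitary (psiR c u T psi) w /\
       (forall j l a b,
          (a != b -> alpha (psiR c u T psi (w j) (w j)) l a b = 0) /\
          (alpha (psiR c u T psi (w j) (w j)) l a a = 'i%C \/
           alpha (psiR c u T psi (w j) (w j)) l a a = - 'i%C)) /\
       (forall j, normD c T d (s j) <=
           Num.sqrt (Num.sqrt ((2 * d * e)%N%:R)) *
           Num.sqrt (normD c T d (toR R (psi (v j) (v j)))))).
Proof.
split=> [e alpha | e d alpha]; [exact: typeIII_normal_basis | exact: typeIV_normal_basis].
Qed.
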